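(* Fix a nonempty $A\subseteq S$ and $w\in A$, and let $E_0=\{\tau_{\mathcal E_N^w}=\tau_{\mathcal E_N(A)}\}$. Let $x,y\in S$ be distinct with $r(x,y)>r(y,x)=0$. Then, as $N\to\infty$, $$\big|\mathbb P_{\zeta_1^{x,y}}[E_0]-\mathbb P_{\xi_N^y}[E_0]\big|=O(d_N\log N)\quad\text{and}\quad\big|\mathbb P_{\zeta_{N-1}^{x,y}}[E_0]-\mathbb P_{\xi_N^y}[E_0]\big|=O(d_N).$$
   Context: $S$ is finite; $r:S\times S\to[0,\infty)$, $r(x,x)=0$, are the rates of an irreducible continuous-time Markov chain on $S$. $\mathcal H_N=\{\eta\in\{0,1,2,\dots\}^S:\sum_x\eta_x=N\}$; $\sigma^{x,y}\eta$ moves one particle from $x$ to $y$ (if $\eta_x\ge1$; else $\sigma^{x,y}\eta=\eta$). With $d_N>0$, $d_N\to0$, the inclusion process is the Markov chain on $\mathcal H_N$ with generator $(\mathcal L_NF)(\eta)=\sum_{x\ne y}\eta_x(d_N+\eta_y)r(x,y)\{F(\sigma^{x,y}\eta)-F(\eta)\}$; $\mathbb P_\eta$ its law from $\eta$; $\tau_{\mathcal C}$ the hitting time of $\mathcal C\subseteq\mathcal H_N$. $\xi_N^z$: all $N$ particles at $z$; $\mathcal E_N^z=\{\xi_N^z\}$, $\mathcal E_N(A)=\bigcup_{z\in A}\mathcal E_N^z$. For $0\le i\le N$, $\zeta_i^{x,y}$ is the configuration with $N-i$ particles at $x$, $i$ at $y$, none elsewhere. $O(\cdot)$ has constant independent of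 $N$. *)

From HB Require Import structures.
From mathcomp Require Import all_boot all_order all_algebra.
From mathcomp Require Import all_classical all_reals all_analysis.
Set Implicit Arguments. Unset Strict Implicit. Unset Printing Implicit Defensive.
Import Order.TTheory GRing.Theory Num.Theory numFieldNormedType.Exports.
Local Open Scope ring_scope.

Section Inclusion.
Variables (R : realType) (S : finType).

Definition config := {ffun S -> nat}.

Definition sigma (x y : S) (eta : config) : config :=
  if (0 < eta x)%N then
    [ffun z => if z == x then (eta z).-1
               else if z == y then (eta z).+1 else eta z]
  else eta.

Definition xi (N : nat) (z : S) : config := [ffun u => if u == z then N else 0%N].

Definition zeta (N i : nat) (x y : S) : config :=
  [ffun u => if u == x then (N - i)%N else if u == y then i else 0%N].

(* jump rate eta -> sigma^{x,y} eta of the inclusion process with parameter dN *)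
Definition irate (r : S -> S -> R) (dN : R) (eta : config) (x y : S) : R :=
  (eta x)%:R * (dN + (eta y)%:R) * r x y.

Definition totrate (r : S -> S -> R) (dN : R) (eta : config) : R :=
  \sum_(x : S) \sum_(y : S | y != x) irate r dN eta x y.

Definition inEA (N : nat) (A : {set S}) (eta : config) : bool :=
  [exists z in A, eta == xi N z].

(* p_n(eta) = probability that the (jump chain of the) inclusion process
   started at eta reaches E_N(A) within n jumps and that the first visited
   point of E_N(A) is xi_N^w. *)
Fixpoint hit_approx (r : S -> S -> R) (dN : R) (N : nat) (A : {set S}) (w : S)
    (n : nat) (eta : config) : R :=
  if inEA N A eta then (eta == xi N w)%:R
  else match n with
       | 0%N => 0
       | n'.+1 =>
         (\sum_(x : S) \sum_(y : S | y != x)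
             irate r dN eta x y * hit_approx r dN N A w n' (sigma x y eta))
           / totrate r dN eta
       end.

Definition hitprob (r : S -> S -> R) (dN : R) (N : nat) (A : {set S}) (w : S)
    (eta : config) : R :=
  limn (fun n => hit_approx r dN N A w n eta).

Definition irreducible_rates (r : S -> S -> R) : Prop :=
  forall x y : S, connect [rel a b | 0 < r a b] x y.

End Inclusion.

From HB Require Import structures.
From mathcomp Require Import all_boot all_order all_algebra.
From mathcomp Require Import all_classical all_reals all_analysis.
From mathcomp Require Import ring lra zify.

Set Implicit Arguments.
Unset Strict Implicit.
Unset Printing Implicit Defensive.
Import Order.TTheory GRing.Theory Num.Theory numFieldNormedType.Exports.
Local Open Scope classical_set_scope.
Local Open Scope ring_scope.

(* Along the segment zeta_k = zeta_k^{x,y} (N - k particles at x, k at y) the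
   move x -> y has rate (N - k)(d_N + k) r(x,y) >= k (N - k) r(x,y), while,
   because r(y,x) = 0, every other move out of zeta_k has rate at most
   d_N eta_a r(a,b).  Conditioning on the first jump, the absorption
   probability therefore changes by at most d_N N M / (k (N - k) r(x,y)) from
   zeta_k to zeta_{k+1}, M being the total mass of r; this is proved for the
   n-step approximations and passed to the limit.  Summing from k to N with
   N / (i (N - i)) = 1/i + 1/(N - i) gives O(d_N log N) from zeta_1 and O(d_N)
   from zeta_{N-1}.  The bounds hold for each N separately. *)

Section RealFacts.
Variable R : realType.

Lemma cvg_dist_le_shift (u v : nat -> R) (a b B : R) (j : nat) :
  u @ \oo --> a -> v @ \oo --> b ->
  (forall m, `|u (m + j)%N - v m| <= B) -> `|a - b| <= B.
Proof.
move=> ua vb uvB.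
have uja : [sequence u (m + j)%N]_m @ \oo --> a by rewrite cvg_shiftn.
apply: (cvgr_to_le (cvg_norm (cvgB uja vb))).
exact: nearW.
Qed.

Lemma telescope_dist_le (g : nat -> nat -> R) (c : nat -> R) (m N : nat) :
  (forall n k, (m <= k < N)%N -> `|g n.+1 k - g n k.+1| <= c k) ->
  forall n k, (m <= k <= N)%N ->
  `|g (n + (N - k))%N k - g n N| <= \sum_(k <= i < N) c i.
Proof.
move=> step n k /andP[mk kN].
have tele j : (j <= N - m)%N ->
    `|g (n + j)%N (N - j)%N - g n N| <= \sum_(N - j <= i < N) c i.
  elim: j => [|j IH] jNm; first by rewrite addn0 subn0 subrr normr0 big_geq.
  have SjN : (N - j.+1 < N)%N by lia.
  have e : (N - j)%N = (N - j.+1).+1 by lia.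
  rewrite (big_ltn SjN) -e.
  apply: le_trans (ler_distD (g (n + j)%N (N - j)%N) _ _) _.
  apply: lerD; last exact: IH (ltnW jNm).
  by rewrite addnS e; apply: step; lia.
by have := tele (N - k)%N; rewrite subKn //; apply; lia.
Qed.

Lemma ln_succ_sub_ge (t : R) : 0 < t -> (t + 1)^-1 <= ln (t + 1) - ln t.
Proof.
move=> t0; have t1 : 0 < t + 1 by rewrite addr_gt0.
have : ln (1 - (t + 1)^-1) <= - (t + 1)^-1.
  apply: le_ln1Dx; rewrite ltrN2 invf_lt1 //; lra.
have -> : 1 - (t + 1)^-1 = t / (t + 1) by field; rewrite gt_eqF.
by rewrite ln_div ?posrE // lerNr opprB.
Qed.

Lemma harmonic_le_ln (n : nat) :
  \sum_(1 <= i < n.+1) (i%:R : R)^-1 <= 2 * ln n.+1%:R.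
Proof.
elim: n => [|n IH]; first by rewrite big_geq // ln1 mulr0.
rewrite big_nat_recr //=.
have step : (n.+1%:R : R)^-1 <= 2 * (ln n.+2%:R - ln n.+1%:R).
  have half : (n.+1%:R : R)^-1 <= 2 * (n.+2%:R)^-1.
    have -> : 2 * (n.+2%:R : R)^-1 = (n.+2%:R / 2)^-1 by rewrite invfM invrK mulrC.
    rewrite lef_pV2 ?posrE ?divr_gt0 ?ltr0n // ler_pdivrMr //.
    by rewrite -natrM ler_nat; lia.
  apply: le_trans half _; rewrite ler_wpM2l // -natr1.
  exact/ln_succ_sub_ge/ltr0Sn.
by apply: le_trans (lerD IH step) _; rewrite -mulrDr addrC subrK.
Qed.

Lemma sum_partial_fractions (n : nat) :
  \sum_(1 <= i < n) (n%:R / (i%:R * (n - i)%:R) : R) =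
  2 * \sum_(1 <= i < n) (i%:R : R)^-1.
Proof.
rewrite mulr_natl mulr2n [X in _ = _ + X](big_nat_rev _ _ 1 n) -big_split /=.
apply: eq_big_nat => i /andP[i1 iN].
have -> : (1 + n - i.+1 = n - i)%N by lia.
rewrite -{1}(subnKC (ltnW iN)) natrD.
have i0 : (i%:R : R) != 0 by rewrite pnatr_eq0 -lt0n.
have ni0 : ((n - i)%:R : R) != 0 by rewrite pnatr_eq0 subn_eq0 -ltnNge.
by field; rewrite i0 ni0.
Qed.

End RealFacts.

Lemma zeta_full (S : finType) (N : nat) (x y : S) : x != y -> zeta N N x y = xi N y.
Proof.
move=> xy; apply/ffunP => u; rewrite !ffunE.
by have [->|//] := eqVneq u x; rewrite subnn (negbTE xy).
Qed.

Definition rate_mass (R : realType) (S : finType) (r : S -> S -> R) : R :=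
  \sum_a \sum_b r a b.

Section HitApprox.
Variables (R : realType) (S : finType) (r : S -> S -> R) (dN : R) (N : nat)
  (A : {set S}) (w : S).
Hypotheses (r_ge0 : forall a b, 0 <= r a b) (dN_gt0 : 0 < dN).

Local Notation p := (hit_approx r dN N A w).

Lemma hit_approxS n eta : p n.+1 eta =
  if inEA N A eta then (eta == xi N w)%:R
  else (\sum_a \sum_(b | b != a) irate r dN eta a b * p n (sigma a b eta))
       / totrate r dN eta.
Proof. by []. Qed.

Lemma irate_ge0 eta a b : 0 <= irate r dN eta a b.
Proof. by rewrite /irate !mulr_ge0 // addr_ge0 // ltW. Qed.

Lemma totrate_ge0 eta : 0 <= totrate r dN eta.
Proof. by rewrite sumr_ge0 // => a _; rewrite sumr_ge0 // => b _; exact: irate_ge0. Qed.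

Lemma totrate_ge_irate eta a0 b0 : b0 != a0 ->
  irate r dN eta a0 b0 <= totrate r dN eta.
Proof.
move=> b0a0; rewrite /totrate (bigD1 a0) //= (bigD1 b0) //= -addrA lerDl.
rewrite addr_ge0 ?sumr_ge0 // => [b _|a _]; first exact: irate_ge0.
by rewrite sumr_ge0 // => b _; exact: irate_ge0.
Qed.

Lemma hit_approx_bounds n eta : 0 <= p n eta <= 1.
Proof.
have indicator_bounds (c : bool) : (0 : R) <= c%:R <= 1 by case: c; rewrite lexx ler01.
elim: n eta => [|n IH] eta; rewrite ?hit_approxS /=;
  case: ifP => _; rewrite ?indicator_bounds ?lexx ?ler01 //.
set T := totrate r dN eta.
have term_bounds a b : 0 <= irate r dN eta a b * p n (sigma a b eta) <= irate r dN eta a b.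
  have /andP[p0 p1] := IH (sigma a b eta).
  by rewrite mulr_ge0 ?irate_ge0 // ler_piMr ?irate_ge0.
have [->|T0] := eqVneq T 0; first by rewrite invr0 mulr0 lexx ler01.
have Tgt0 : 0 < T by rewrite lt_def T0 totrate_ge0.
rewrite divr_ge0 ?(ltW Tgt0) ?ler_pdivrMr // ?mul1r /=.
  by apply: ler_sum => a _; apply: ler_sum => b _; case/andP: (term_bounds a b).
by apply: sumr_ge0 => a _; apply: sumr_ge0 => b _; case/andP: (term_bounds a b).
Qed.

Lemma hit_approx_nondecreasing n eta : p n eta <= p n.+1 eta.
Proof.
elim: n eta => [|n IH] eta.
  by have := hit_approx_bounds 1 eta; rewrite hit_approxS /=; case: ifP => // _ /andP[].
rewrite hit_approxS [leRHS]hit_approxS; case: ifP => // _.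
rewrite ler_wpM2r ?invr_ge0 ?totrate_ge0 //.
by apply: ler_sum => a _; apply: ler_sum => b _; rewrite ler_wpM2l ?irate_ge0.
Qed.

Lemma hit_approx_cvg eta : (fun n => p n eta) @ \oo --> hitprob r dN N A w eta.
Proof.
apply: nondecreasing_is_cvgn.
  by apply/nondecreasing_seqP => n; exact: hit_approx_nondecreasing.
by exists 1 => _ [n _ <-]; case/andP: (hit_approx_bounds n eta).
Qed.

Lemma hit_approx_step_dist n eta a0 b0 (g : S -> S -> R) :
  ~~ inEA N A eta -> b0 != a0 -> 0 < irate r dN eta a0 b0 ->
  (forall a b, 0 <= g a b) ->
  (forall a b, b != a -> (a, b) != (a0, b0) -> irate r dN eta a b <= g a b) ->
  `|p n.+1 eta - p n (sigma a0 b0 eta)| <=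
    (\sum_a \sum_(b | b != a) g a b) / irate r dN eta a0 b0.
Proof.
move=> eta_notin b0a0 q_gt0 g_ge0 g_dom.
set q := irate r dN eta a0 b0; set T := totrate r dN eta.
set eta' := sigma a0 b0 eta.
have T_gt0 : 0 < T := lt_le_trans q_gt0 (totrate_ge_irate eta b0a0).
have first_jump : p n.+1 eta - p n eta' =
    (\sum_a \sum_(b | b != a) irate r dN eta a b * (p n (sigma a b eta) - p n eta')) / T.
  rewrite hit_approxS (negbTE eta_notin) -[in LHS](mulfK (lt0r_neq0 T_gt0) (p n eta')).
  rewrite -mulrBl; congr (_ / _); rewrite /T /totrate mulr_sumr -sumrB.
  apply: eq_bigr => a _; rewrite mulr_sumr -sumrB.
  by apply: eq_bigr => b _; rewrite mulrBr [_ * irate _ _ _ _ _]mulrC.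
have term_le a b : b != a ->
    `|irate r dN eta a b * (p n (sigma a b eta) - p n eta')| <= g a b.
  move=> ba; rewrite normrM ger0_norm ?irate_ge0 //.
  have [[-> ->]|ne] := eqVneq (a, b) (a0, b0); first by rewrite subrr normr0 mulr0.
  apply: le_trans (g_dom a b ba ne); rewrite ler_piMr ?irate_ge0 //.
  have /andP[? ?] := hit_approx_bounds n (sigma a b eta).
  have /andP[? ?] := hit_approx_bounds n eta'.
  by rewrite ler_norml; apply/andP; split; lra.
rewrite first_jump normrM [`|T^-1|]ger0_norm ?invr_ge0 ?(ltW T_gt0) //.
apply: ler_pM.
- exact: normr_ge0.
- by rewrite invr_ge0 ltW.
- apply: le_trans (ler_norm_sum _ _ _) _; apply: ler_sum => a _.
  by apply: le_trans (ler_norm_sum _ _ _) _; apply: ler_sum => b; apply: term_le.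
by rewrite lef_pV2 ?posrE // totrate_ge_irate.
Qed.

Section TwoSiteSegment.
Variables (x y : S).
Hypotheses (xy : x != y) (rxy_gt0 : 0 < r x y) (ryx0 : r y x = 0).

Local Notation zeta k := (zeta N k x y).

Lemma sigma_zeta k : (k < N)%N -> sigma x y (zeta k) = zeta k.+1.
Proof.
move=> kN; rewrite /sigma !ffunE eqxx subn_gt0 kN; apply/ffunP => u; rewrite !ffunE.
by have [eux|ux] := eqVneq u x; [subst u; lia | case: eqVneq].
Qed.

Lemma zeta_notin_EA k : (0 < k < N)%N -> ~~ inEA N A (zeta k).
Proof.
move=> /andP[k0 kN]; apply/existsP => -[z /andP[_ /eqP /ffunP/(_ x)]].
by rewrite !ffunE eqxx; case: (x == z); lia.
Qed.

Lemma sum_zeta k : (k <= N)%N -> \sum_a ((zeta k a)%:R : R) = N%:R.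
Proof.
move=> kN; rewrite (bigD1 x) //= (bigD1 y) 1?eq_sym //= big1 => [|u /andP[uy ux]].
  by rewrite !ffunE eqxx eq_sym (negbTE xy) eqxx addr0 -natrD subnK.
by rewrite ffunE (negbTE ux) (negbTE uy).
Qed.

Lemma irate_zeta_xy k : irate r dN (zeta k) x y = (N - k)%:R * (dN + k%:R) * r x y.
Proof. by rewrite /irate !ffunE eqxx eq_sym (negbTE xy) eqxx. Qed.

Lemma irate_zeta_other_le k a b : b != a -> (a, b) != (x, y) ->
  irate r dN (zeta k) a b <= dN * (zeta k a)%:R * r a b.
Proof.
move=> ba ab_xy; rewrite /irate mulrDr mulrDl [_ * dN]mulrC.
suff -> : ((zeta k a)%:R * (zeta k b)%:R * r a b = 0 :> R) by rewrite addr0.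
rewrite !ffunE; have [eax|ax] := eqVneq a x.
  subst a; have [eby|_] := eqVneq b y; first by rewrite eby eqxx in ab_xy.
  by rewrite (negbTE ba) mulr0 mul0r.
have [eay|_] := eqVneq a y; last by rewrite !mul0r.
subst a; have [->|bx] := eqVneq b x; first by rewrite ryx0 mulr0.
by rewrite (negbTE ba) mulr0 mul0r.
Qed.

Lemma hit_approx_zeta_step n k : (0 < k < N)%N ->
  `|p n.+1 (zeta k) - p n (zeta k.+1)| <=
    dN * (rate_mass r / r x y) * (N%:R / (k%:R * (N - k)%:R)).
Proof.
move=> /andP[k0 kN].
set g := fun a b => dN * (zeta k a)%:R * r a b.
have g_ge0 a b : 0 <= g a b by rewrite /g !mulr_ge0 // ltW.
set q0 := (N - k)%:R * k%:R * r x y.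
have q0_gt0 : 0 < q0 by rewrite /q0 !mulr_gt0 ?ltr0n ?subn_gt0.
have q0_le : q0 <= irate r dN (zeta k) x y.
  by rewrite irate_zeta_xy ler_wpM2r ?(ltW rxy_gt0) // ler_wpM2l // lerDr ltW.
have row_le a : \sum_(b | b != a) r a b <= rate_mass r.
  apply: (@le_trans _ _ (\sum_b r a b)).
    by rewrite [leRHS](bigD1 a) //= lerDr.
  by rewrite /rate_mass [leRHS](bigD1 a) //= lerDl sumr_ge0 // => a' _; rewrite sumr_ge0.
have sum_g : \sum_a \sum_(b | b != a) g a b <= dN * N%:R * rate_mass r.
  rewrite -(sum_zeta (ltnW kN)) mulrAC mulr_sumr; apply: ler_sum => a _.
  by rewrite /g -mulr_sumr [leRHS]mulrAC ler_wpM2l ?mulr_ge0 ?(ltW dN_gt0).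
rewrite -(sigma_zeta kN).
apply: le_trans (hit_approx_step_dist n (zeta_notin_EA _) _ _ g_ge0 _) _.
- by rewrite k0.
- by rewrite eq_sym.
- exact: lt_le_trans q0_le.
- exact: irate_zeta_other_le.
have -> : dN * (rate_mass r / r x y) * (N%:R / (k%:R * (N - k)%:R)) =
          dN * N%:R * rate_mass r / q0.
  have k_neq0 : (k%:R : R) != 0 by rewrite pnatr_eq0 -lt0n.
  have Nk_neq0 : ((N - k)%:R : R) != 0 by rewrite pnatr_eq0 subn_eq0 -ltnNge.
  by rewrite /q0; field; rewrite k_neq0 Nk_neq0 lt0r_neq0.
have q_gt0 := lt_le_trans q0_gt0 q0_le.
apply: ler_pM => //; first by apply: sumr_ge0 => a _; apply: sumr_ge0.
  by rewrite invr_ge0 ltW.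
by rewrite lef_pV2 ?posrE.
Qed.

Lemma hitprob_zeta_dist k : (0 < k <= N)%N ->
  `|hitprob r dN N A w (zeta k) - hitprob r dN N A w (xi N y)| <=
    dN * (rate_mass r / r x y) * \sum_(k <= i < N) N%:R / (i%:R * (N - i)%:R).
Proof.
move=> /andP[k0 kN]; rewrite -(zeta_full N xy) mulr_sumr.
apply: (cvg_dist_le_shift (j := (N - k)%N)
  (@hit_approx_cvg (zeta k)) (@hit_approx_cvg (zeta N))) => m.
apply: (telescope_dist_le (g := fun n i => p n (zeta i)) (m := 1)); last by rewrite k0.
by move=> n i /andP[i0 iN]; apply: hit_approx_zeta_step; rewrite i0.
Qed.

End TwoSiteSegment.

End HitApprox.

Theorem lemma4p9 (R : realType) (S : finType) (r : S -> S -> R)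
  (d : nat -> R) (A : {set S}) (w x y : S) :
  (forall a b, 0 <= r a b) -> (forall a, r a a = 0) -> irreducible_rates r ->
  (forall N, 0 < d N) -> d @ \oo --> (0 : R) ->
  w \in A -> x != y -> 0 < r x y -> r y x = 0 ->
  exists C : R, exists N0 : nat,
    forall N : nat, (N0 <= N)%N ->
      `| hitprob r (d N) N A w (zeta N 1 x y) - hitprob r (d N) N A w (xi N y) |
        <= C * (d N * ln (N%:R : R))
   /\ `| hitprob r (d N) N A w (zeta N N.-1 x y) - hitprob r (d N) N A w (xi N y) |
        <= C * d N.
Proof.
move=> r_ge0 _ _ d_gt0 _ _ xy rxy_gt0 ryx0.
set K := rate_mass r / r x y.
have K_ge0 : 0 <= K.
  by rewrite divr_ge0 ?(ltW rxy_gt0) // sumr_ge0 // => a _; rewrite sumr_ge0.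
exists (4 * K), 2%N; case=> [|[|n]] // _.
have dK_ge0 : 0 <= d n.+2 * K by rewrite mulr_ge0 // ltW.
have dist k := @hitprob_zeta_dist R S r (d n.+2) n.+2 A w r_ge0 (d_gt0 n.+2)
  x y xy rxy_gt0 ryx0 k.
split.
  apply: le_trans (dist 1%N _) _ => //.
  rewrite sum_partial_fractions (_ : 4 * K * _ = d n.+2 * K * (2 * (2 * ln n.+2%:R))); last by ring.
  by rewrite ler_wpM2l // ler_wpM2l // harmonic_le_ln.
apply: le_trans (dist n.+1 _) _; first by rewrite /= ltnW.
rewrite big_nat1 subSnn mulr1 (_ : 4 * K * d n.+2 = d n.+2 * K * 4); last by ring.
rewrite ler_wpM2l // ler_pdivrMr ?ltr0n // -natrM ler_nat; lia.
Qed.
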